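(* Let $\mathcal{M}$ be an ergodic (not necessarily reversible) Markov chain on a finite state space, and let $\widetilde{\mathcal{M}}$ be its continuization. Then $$\Phi(\mathcal{M})\ \ge\ \frac{\frac12-\frac{1}{2e}}{\tau(\widetilde{\mathcal{M}},\frac{1}{2e})}.$$
   Context: A (discrete-time) Markov chain on a finite state space $\Omega$ with transition matrix $P$ is ergodic if irreducible and aperiodic; it then has a unique stationary distribution $\pi>0$. Variation distance: $\|\theta_1-\theta_2\|=\frac12\sum_i|\theta_1(i)-\theta_2(i)|$. Continuization: with $Q=P-I$, the continuous-time chain $\widetilde{\mathcal{M}}$ has time-$t$ transition matrix $\widetilde P^t=\exp(Qt)$ (matrix exponential), $t\ge0$ real. Its mixing time from $x$ is $\tau_x(\widetilde{\mathcal{M}},\varepsilon)=\inf\{t>0: \|v_x\exp(Qt')-\pi\|\le\varepsilon \text{ for all real } t'\ge t\}$, where $v_x$ is the row unit vector at $x$, and $\tau(\widetilde{\mathcal{M}},\varepsilon)=\max_x\tau_x(\widetilde{\mathcal{M}},\varepsilon)$. Conductance: for $S\subset\Omega$ with $0<\pi(S)<1$ and $\bar S=\Omega\setminus S$, $\Phi_S(\mathcal{M})=\dfrac{\sum_{i\in S}\sum_{j\in\bar S}\pi(i)P(i,j)+\sum_{i\in\bar S}\sum_{j\in S}\pi(i)P(i,j)}{2\pi(S)\pi(\bar S)}$, and $\Phi(\mathcal{M})=\min_S\Phi_S(\mathcal{M})$ over all such $S$. *)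

From HB Require Import structures.
From mathcomp Require Import all_boot all_order all_algebra.
From mathcomp Require Import all_classical all_reals all_analysis.
Set Implicit Arguments. Unset Strict Implicit. Unset Printing Implicit Defensive.
Import Order.TTheory GRing.Theory Num.Theory.
Local Open Scope ring_scope.
Local Open Scope classical_set_scope.

Section MarkovDefs.
Variables (R : realType) (n : nat).

Definition stochastic (P : 'M[R]_n) : Prop :=
  (forall i j, 0 <= P i j) /\ (forall i, \sum_j P i j = 1).

Definition irreducible (P : 'M[R]_n) : Prop :=
  forall i j, exists k : nat, 0 < (P ^+ k) i j.

(* period of i is gcd {k >= 1 : P^k(i,i) > 0}; aperiodic: every period is 1,
   i.e. the only common divisor of all return times is 1 *)
Definition aperiodic (P : 'M[R]_n) : Prop :=
  forall i, forall d : nat,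
    (forall k : nat, (0 < k)%N -> 0 < (P ^+ k) i i -> (d %| k)%N) -> d = 1%N.

Definition ergodic (P : 'M[R]_n) : Prop :=
  stochastic P /\ irreducible P /\ aperiodic P.

Definition stationary (P : 'M[R]_n) (pi : 'rV[R]_n) : Prop :=
  (forall i, 0 <= pi 0 i) /\ \sum_i pi 0 i = 1 /\ pi *m P = pi.

Definition expm (A : 'M[R]_n) : 'M[R]_n :=
  \matrix_(i, j) limn (fun N => \sum_(k < N) (A ^+ k) i j / (k`!)%:R).

(* continuization: time-t transition matrix exp(Q t), Q = P - I *)
Definition ctm (P : 'M[R]_n) (t : R) : 'M[R]_n := expm (t *: (P - 1%:M)).

Definition vdist (a b : 'rV[R]_n) : R := 2^-1 * \sum_i `|a 0 i - b 0 i|.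

Definition unitv (x : 'I_n) : 'rV[R]_n := delta_mx 0 x.

Definition mixtime_from (P : 'M[R]_n) (pi : 'rV[R]_n) (eps : R) (x : 'I_n) : R :=
  inf [set t : R | 0 < t /\
        forall t' : R, t <= t' -> vdist (unitv x *m ctm P t') pi <= eps].

Definition mixtime (P : 'M[R]_n) (pi : 'rV[R]_n) (eps : R) : R :=
  \big[Order.max/0]_(x < n) mixtime_from P pi eps x.

Definition piS (pi : 'rV[R]_n) (S : {set 'I_n}) : R := \sum_(i in S) pi 0 i.

Definition conductanceS (P : 'M[R]_n) (pi : 'rV[R]_n) (S : {set 'I_n}) : R :=
  (\sum_(i in S) \sum_(j in ~: S) pi 0 i * P i j
   + \sum_(i in ~: S) \sum_(j in S) pi 0 i * P i j)
  / (2 * piS pi S * piS pi (~: S)).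

End MarkovDefs.

(* Start the continuized chain from pi conditioned on S, where pi(S) <= 1/2 (the
   other case follows since Phi_S = Phi_{~S}).  Expanding
   exp(t(P - I)) = e^-t sum_k t^k P^k / k!, each discrete step moves at most
   Q(S, ~S) / pi(S) of the mass out of S, so by time t at most t Q(S, ~S) / pi(S)
   has escaped.  Beyond the mixing time, the distribution is within 1/(2e) of pi,
   so at least pi(~S) - 1/(2e) has escaped.  Comparing the two bounds and letting
   t decrease to the mixing time gives the inequality.  That the mixing time is
   finite, so that its infimum is approached from above by good times, follows
   from Doeblin's contraction for the lazy chain (I + P)/2, of which the
   continuization is also a Poisson average. *)

From HB Require Import structures.
From mathcomp Require Import all_boot all_order all_algebra.
From mathcomp Require Import all_classical all_reals all_analysis.
From mathcomp Require Import ring lra zify.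
Import Order.TTheory GRing.Theory Num.Theory numFieldNormedType.Exports.
Local Open Scope ring_scope.
Local Open Scope classical_set_scope.

Section ExponentialSeries.
Context {R : realType}.
Implicit Types (x y : R) (a b : nat -> R).

Lemma cvg_sum_exp_coeff x : \sum_(k < N) exp_coeff x k @[N --> \oo] --> expR x.
Proof.
have := is_cvg_series_exp_coeff x; rewrite /expR /series /=.
by under eq_fun do rewrite big_mkord.
Qed.

Lemma sum_exp_coeff_le_expR x N : 0 <= x -> \sum_(k < N) exp_coeff x k <= expR x.
Proof.
move=> x_ge0; have exp_nondecr : nondecreasing_seq (series (exp_coeff x)).
  move=> p q le_pq; apply: (@nondecreasing_series _ _ predT) => // k _ _.
  exact: exp_coeff_ge0.
have := nondecreasing_cvgn_le exp_nondecr (is_cvg_series_exp_coeff x) N.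
by rewrite /series /= big_mkord.
Qed.

Lemma norm_exp_coeff x k : `|exp_coeff x k| = exp_coeff `|x| k.
Proof. by rewrite /exp_coeff /= normrM normrX normfV normr_nat. Qed.

Lemma exp_coeffM x y k : exp_coeff (x * y) k = exp_coeff x k * y ^+ k.
Proof. by rewrite /exp_coeff /= exprMn mulrAC. Qed.

Lemma sum_exp_coeff_mulrn x N :
  \sum_(k < N.+1) exp_coeff x k * k%:R = x * \sum_(k < N) exp_coeff x k.
Proof.
rewrite big_ord_recl /= mulr0 add0r mulr_sumr; apply: eq_bigr => k _.
have kfact_neq0 : (k`!%:R : R) != 0 by rewrite pnatr_eq0 -lt0n fact_gt0.
rewrite /bump /exp_coeff /= add1n factS natrM exprS; field.
by rewrite kfact_neq0 addrC natr1 pnatr_eq0.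
Qed.

Lemma bin_div_fact k i : (i <= k)%N ->
  'C(k, i)%:R / k`!%:R = ((k - i)`!%:R)^-1 * (i`!%:R)^-1 :> R.
Proof.
move=> le_ik; rewrite -(bin_fact le_ik) !natrM.
have fact_neq0 m : (m`!%:R : R) != 0 by rewrite pnatr_eq0 -lt0n fact_gt0.
have bin_neq0 : ('C(k, i)%:R : R) != 0 by rewrite pnatr_eq0 -lt0n bin_gt0.
by field; rewrite !fact_neq0 bin_neq0.
Qed.

Lemma exp_coeff_le_expr x k K : 1 <= x -> (k <= K)%N -> exp_coeff x k <= x ^+ K.
Proof.
move=> x_ge1 le_kK; have x_ge0 : 0 <= x by lra.
apply: (@le_trans _ _ (x ^+ k)); last exact: ler_weXn2l.
rewrite /exp_coeff /= ler_pdivrMr ?ltr0n ?fact_gt0 //.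
by rewrite ler_peMr ?exprn_ge0 ?ler1n ?fact_gt0.
Qed.

Lemma expr_le_expR x K : 0 <= x -> x ^+ K.+1 <= K.+1`!%:R * expR x.
Proof.
move=> x_ge0; have := expR_ge1Dxn K x_ge0.
by rewrite -ler_pdivrMl ?ltr0n ?fact_gt0 // mulrC; lra.
Qed.

Lemma sum_nat_lt_le N K : \sum_(k < N) ((k < K)%N%:R : R) <= K%:R.
Proof.
have -> : \sum_(k < N) ((k < K)%N%:R : R) = (minn N K)%:R.
  elim: N => [|N IH]; first by rewrite big_ord0 min0n.
  by rewrite big_ord_recr /= IH -natrD; congr (_%:R); lia.
by rewrite ler_nat geq_minr.
Qed.

Lemma poisson_sum_le (r : nat -> R) x (e : R) K N : 1 <= x ->
  (forall k, 0 <= r k <= 1) -> (forall k, (K <= k)%N -> r k <= e) ->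
  \sum_(k < N) exp_coeff x k * r k <= K%:R * x ^+ K + e * expR x.
Proof.
move=> x_ge1 r_01 r_le; have x_ge0 : 0 <= x by lra.
apply: (@le_trans _ _ (\sum_(k < N) ((k < K)%N%:R * x ^+ K + e * exp_coeff x k))).
  apply: ler_sum => k _; have e_ge0 := exp_coeff_ge0 k x_ge0.
  have [lt_kK|le_Kk] := ltnP k K.
    rewrite mulr1n mul1r ler_wpDr //.
      rewrite mulr_ge0 //; apply: le_trans (r_le K (leqnn K)).
      by case/andP: (r_01 K).
    apply: (@le_trans _ _ (exp_coeff x k)); last exact/exp_coeff_le_expr/ltnW.
    by rewrite ler_piMr //; case/andP: (r_01 k).
  by rewrite mul0r add0r mulrC ler_wpM2r ?r_le.
rewrite big_split /= -mulr_suml -mulr_sumr lerD //.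
  by rewrite ler_wpM2r ?exprn_ge0 ?sum_nat_lt_le.
rewrite ler_wpM2l ?sum_exp_coeff_le_expR //.
by apply: le_trans (r_le K (leqnn K)); case/andP: (r_01 K).
Qed.

(* The product of two partial sums of length N splits into the partial sum of
   length N of the Cauchy product and the terms a j * b i with N <= i + j. *)
Definition cauchy_sum a b N := \sum_(k < N) \sum_(i < k.+1) a (k - i)%N * b i.
Definition cauchy_defect a b N :=
  \sum_(i < N) \sum_(j < N | (N - i <= j)%N) a j * b i.

Lemma sum_antidiagonal (g : nat -> nat -> R) N :
  \sum_(k < N) \sum_(i < k.+1) g i (k - i)%N = \sum_(i < N) \sum_(j < N - i) g i j.
Proof.
elim: N => [|N IH]; first by rewrite !big_ord0.
rewrite big_ord_recr /= IH.
have -> : \sum_(i < N.+1) \sum_(j < N.+1 - i) g i j =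
          \sum_(i < N.+1) (\sum_(j < N - i) g i j + g i (N - i)%N).
  by apply: eq_bigr => i _; rewrite subSn ?big_ord_recr // -ltnS.
rewrite big_split /=; congr (_ + _).
by rewrite big_ord_recr /= subnn big_ord0 addr0.
Qed.

Lemma mul_sum_cauchy a b N :
  (\sum_(j < N) a j) * (\sum_(i < N) b i) = cauchy_sum a b N + cauchy_defect a b N.
Proof.
rewrite /cauchy_sum (sum_antidiagonal (fun i j => a j * b i)) -big_split /=.
rewrite mulrC big_distrl /=; apply: eq_bigr => i _.
rewrite big_distrr /= (big_ord_widen N (fun j => a j * b i)) ?leq_subr //.
rewrite (bigID (fun j : 'I_N => (j < N - i)%N)) /=.
congr (_ + _); first by apply: eq_bigr => j _; rewrite mulrC.
by apply: eq_big => [j|j _]; rewrite 1?mulrC // -leqNgt.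
Qed.

Lemma cauchy_sum_exp_coeff x y N :
  cauchy_sum (exp_coeff x) (exp_coeff y) N = \sum_(k < N) exp_coeff (x + y) k.
Proof.
apply: eq_bigr => k _; rewrite /exp_coeff /= exprDn mulr_suml.
apply: eq_bigr => i _; rewrite -[_ *+ 'C(k, i)]mulr_natr -[RHS]mulrA bin_div_fact.
  by ring.
by rewrite -ltnS.
Qed.

Lemma cvg_cauchy_defect_exp_coeff x y :
  cauchy_defect (exp_coeff x) (exp_coeff y) N @[N --> \oo] --> 0.
Proof.
have -> : cauchy_defect (exp_coeff x) (exp_coeff y) = fun N =>
    (\sum_(k < N) exp_coeff x k) * (\sum_(k < N) exp_coeff y k)
    - \sum_(k < N) exp_coeff (x + y) k.
  by apply: funext => N; rewrite mul_sum_cauchy cauchy_sum_exp_coeff addrC addKr.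
have : (\sum_(k < N) exp_coeff x k) * (\sum_(k < N) exp_coeff y k)
    - \sum_(k < N) exp_coeff (x + y) k @[N --> \oo] --> expR x * expR y - expR (x + y).
  by apply: cvgB; [apply: cvgM|]; exact: cvg_sum_exp_coeff.
by rewrite -expRD subrr.
Qed.

Lemma is_cvg_sum_exp_dominated {a x} : (forall k, `|a k| <= exp_coeff x k) ->
  cvgn (fun N => \sum_(k < N) a k).
Proof.
move=> a_le.
have : cvgn (series a).
  apply: normed_cvg; apply: (@series_le_cvg _ _ (exp_coeff x)) => //.
  - by move=> k /=.
  - by move=> k; apply: le_trans (a_le k).
  - exact: is_cvg_series_exp_coeff.
by rewrite /series /=; under eq_fun do rewrite big_mkord.
Qed.

(* Mertens' theorem, in the special case of exponentially dominated series. *)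
Lemma cvg_cauchy_sum_exp_dominated {a b x y} {A B : R} :
  (forall k, `|a k| <= exp_coeff x k) -> (forall k, `|b k| <= exp_coeff y k) ->
  \sum_(k < N) a k @[N --> \oo] --> A -> \sum_(k < N) b k @[N --> \oo] --> B ->
  cauchy_sum a b N @[N --> \oo] --> A * B.
Proof.
move=> a_le b_le sumA sumB.
have defect_le N : `|cauchy_defect a b N| <= cauchy_defect (exp_coeff x) (exp_coeff y) N.
  apply: (le_trans (ler_norm_sum _ _ _)); apply: ler_sum => i _.
  apply: (le_trans (ler_norm_sum _ _ _)); apply: ler_sum => j _.
  by rewrite normrM; apply: ler_pM.
have defect0 : cauchy_defect a b N @[N --> \oo] --> 0.
  have exp_defect0 := cvg_cauchy_defect_exp_coeff x y.
  apply: (@squeeze_cvgr _ _ _ _ (fun N => - cauchy_defect (exp_coeff x) (exp_coeff y) N)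
    _ _ _ _ _ exp_defect0); last by rewrite -oppr0; exact: cvgN.
  by near=> N; rewrite -ler_norml.
have -> : cauchy_sum a b = fun N =>
    (\sum_(k < N) a k) * (\sum_(k < N) b k) - cauchy_defect a b N.
  by apply: funext => N; rewrite mul_sum_cauchy addrK.
by rewrite -[A * B]subr0; apply: cvgB => //; exact: cvgM.
Unshelve. all: end_near.
Qed.

End ExponentialSeries.

Section PoissonRepresentation.
Context {R : realType} {n : nat}.
Implicit Types (M : 'M[R]_n) (c : R).

Lemma mxpowZ c M k : (c *: M) ^+ k = c ^+ k *: M ^+ k.
Proof.
elim: k => [|k IH]; first by rewrite !expr0 scale1r.
by rewrite !exprSr IH -!mulmxE -scalemxAl -scalemxAr scalerA.
Qed.

Lemma mxpow_scalar (d : R) k : (d%:M : 'M[R]_n) ^+ k = (d ^+ k)%:M.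
Proof.
elim: k => [|k IH]; first by rewrite !expr0.
by rewrite !exprSr IH -mulmxE -scalar_mxM.
Qed.

Definition mxnorm1 M := \sum_i \sum_j `|M i j|.

Lemma mxnorm1_ge0 M : 0 <= mxnorm1 M.
Proof. by apply: sumr_ge0 => i _; apply: sumr_ge0. Qed.

Lemma norm_mxpow_le M k i j : `|(M ^+ k) i j| <= mxnorm1 M ^+ k.
Proof.
elim: k i j => [|k IH] i j.
  by rewrite expr0 mxE; case: (i == j); rewrite ?normr1 ?normr0.
rewrite exprSr -mulmxE mxE exprSr.
apply: (le_trans (ler_norm_sum _ _ _)).
apply: (@le_trans _ _ (\sum_l mxnorm1 M ^+ k * `|M l j|)).
  by apply: ler_sum => l _; rewrite normrM; apply: ler_wpM2r.
rewrite -mulr_sumr; apply: ler_wpM2l; first exact/exprn_ge0/mxnorm1_ge0.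
apply: ler_sum => l _; rewrite (bigD1 j) //= lerDl.
by apply: sumr_ge0.
Qed.

(* exp(c (M - 1)) = e^(-c) exp(c M): the Cauchy product of exp(c M) with the
   scalar series e^(-c). *)
Lemma cvg_poisson_entry M c i j :
  \sum_(k < N) exp_coeff c k * (M ^+ k) i j @[N --> \oo] -->
  expR c * expm (c *: (M - 1%:M)) i j.
Proof.
set a := fun k => exp_coeff c k * (M ^+ k) i j.
have a_le k : `|a k| <= exp_coeff (`|c| * mxnorm1 M) k.
  rewrite normrM norm_exp_coeff exp_coeffM.
  by apply: ler_wpM2l; [exact/exp_coeff_ge0 | exact: norm_mxpow_le].
have b_le k : `|exp_coeff (- c) k| <= exp_coeff `|c| k.
  by rewrite norm_exp_coeff normrN.
have cvgA := is_cvg_sum_exp_dominated a_le.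
have cvg_expm := cvg_cauchy_sum_exp_dominated a_le b_le cvgA (cvg_sum_exp_coeff (- c)).
have expm_cauchy : (fun N => \sum_(k < N) ((c *: (M - 1%:M)) ^+ k) i j / k`!%:R)
    = cauchy_sum a (exp_coeff (- c)).
  apply: funext => N; apply: eq_bigr => k _.
  have -> : c *: (M - 1%:M) = c *: M + (- c)%:M by rewrite scalerBr -scaleNr scalemx1.
  have cM_comm : GRing.comm (c *: M) (- c)%:M.
    by rewrite /GRing.comm -mulmxE scalar_mxC.
  rewrite (exprDn_comm _ cM_comm) summxE mulr_suml; apply: eq_bigr => l _.
  rewrite mulmxnE mxpow_scalar -mulmxE mul_mx_scalar mxpowZ !mxE.
  rewrite -[_ *+ 'C(k, l)]mulr_natr -mulrA bin_div_fact; last by rewrite -ltnS.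
  by rewrite /a /exp_coeff /=; ring.
by rewrite /expm mxE expm_cauchy (cvg_lim _ cvg_expm) // mulrCA expRxMexpNx_1 mulr1.
Qed.

Lemma cvg_poisson_row M c (v : 'rV[R]_n) j :
  \sum_(k < N) exp_coeff c k * (v *m M ^+ k) 0 j @[N --> \oo] -->
  expR c * (v *m expm (c *: (M - 1%:M))) 0 j.
Proof.
have -> : (fun N => \sum_(k < N) exp_coeff c k * (v *m M ^+ k) 0 j) =
    fun N => \sum_i v 0 i * \sum_(k < N) exp_coeff c k * (M ^+ k) i j.
  apply: funext => N; under eq_bigr do rewrite mxE mulr_sumr.
  rewrite exchange_big /=; apply: eq_bigr => i _.
  by rewrite mulr_sumr; apply: eq_bigr => k _; ring.
rewrite mxE mulr_sumr; under eq_bigr do rewrite mulrCA.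
apply: cvg_big => [|i _]; first exact: add_continuous.
by apply: cvgM; [exact: cvg_cst | exact: cvg_poisson_entry].
Qed.

End PoissonRepresentation.

Section StochasticMatrices.
Context {R : realType} {n : nat}.
Implicit Types (K : 'M[R]_n) (v w : 'rV[R]_n).

Definition prob_vector v := (forall i, 0 <= v 0 i) /\ \sum_i v 0 i = 1.

Lemma prob_vector_stationary K v : stationary K v -> prob_vector v.
Proof. by case=> v_ge0 [v_sum _]. Qed.

Lemma stochastic1 : stochastic (1%:M : 'M[R]_n).
Proof.
split=> [i j|i]; first by rewrite mxE; case: (i == j).
rewrite (bigD1 i) //= mxE eqxx big1 ?addr0 // => j ji.
by rewrite mxE eq_sym (negbTE ji).
Qed.

Lemma stochasticM K1 K2 : stochastic K1 -> stochastic K2 -> stochastic (K1 *m K2).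
Proof.
move=> [K1_ge0 K1_sum] [K2_ge0 K2_sum]; split=> [i j|i].
  by rewrite mxE; apply: sumr_ge0 => l _; exact: mulr_ge0.
under eq_bigr do rewrite mxE.
rewrite exchange_big -(K1_sum i) /=; apply: eq_bigr => l _.
by rewrite -mulr_sumr K2_sum mulr1.
Qed.

Lemma stochasticX K k : stochastic K -> stochastic (K ^+ k).
Proof.
move=> K_st; elim: k => [|k IH]; first by rewrite expr0; exact: stochastic1.
by rewrite exprSr -mulmxE; exact: stochasticM.
Qed.

Lemma sum_row_stochastic K v : stochastic K -> \sum_j (v *m K) 0 j = \sum_i v 0 i.
Proof.
move=> [_ K_sum]; under eq_bigr do rewrite mxE.
rewrite exchange_big /=; apply: eq_bigr => i _.
by rewrite -mulr_sumr K_sum mulr1.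
Qed.

Lemma row_stochastic_ge0 K v : stochastic K -> (forall i, 0 <= v 0 i) ->
  forall j, 0 <= (v *m K) 0 j.
Proof.
move=> [K_ge0 _] v_ge0 j; rewrite mxE.
by apply: sumr_ge0 => i _; exact: mulr_ge0.
Qed.

Lemma prob_vector_stochastic K v : stochastic K -> prob_vector v ->
  prob_vector (v *m K).
Proof.
move=> K_st [v_ge0 v_sum]; split; first exact: row_stochastic_ge0.
by rewrite sum_row_stochastic.
Qed.

Lemma ler_row_stochastic K v w : stochastic K -> (forall i, v 0 i <= w 0 i) ->
  forall j, (v *m K) 0 j <= (w *m K) 0 j.
Proof.
move=> [K_ge0 _] le_vw j; rewrite !mxE.
by apply: ler_sum => i _; exact: ler_wpM2r.
Qed.

Lemma sum_norm_row_contract K (d : R) w : (forall i j, d <= K i j) ->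
  (forall i, \sum_j K i j = 1) -> \sum_i w 0 i = 0 ->
  \sum_j `|(w *m K) 0 j| <= (1 - n%:R * d) * \sum_i `|w 0 i|.
Proof.
move=> K_ge K_sum w_sum0.
have wK_shift j : (w *m K) 0 j = \sum_i w 0 i * (K i j - d).
  rewrite mxE; under [RHS]eq_bigr do rewrite mulrBr.
  by rewrite sumrB -mulr_suml w_sum0 mul0r subr0.
apply: (@le_trans _ _ (\sum_j \sum_i `|w 0 i| * (K i j - d))).
  apply: ler_sum => j _; rewrite wK_shift.
  apply: (le_trans (ler_norm_sum _ _ _)); apply: ler_sum => i _.
  by rewrite normrM (ger0_norm (_ : 0 <= K i j - d)) // subr_ge0.
rewrite exchange_big /= mulr_sumr; apply: ler_sum => i _.
by rewrite -mulr_sumr mulrC sumrB K_sum sumr_const card_ord mulr_natl.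
Qed.

Lemma prob_vector_unitv x : prob_vector (unitv R x).
Proof.
split=> [i|]; first by rewrite mxE; case: (_ && _).
rewrite (bigD1 x) //= mxE !eqxx big1 ?addr0 // => j jx.
by rewrite mxE (negbTE jx) andbF.
Qed.

Lemma unitv_mulmx x K j : (unitv R x *m K) 0 j = K x j.
Proof. by rewrite /unitv -rowE mxE. Qed.

End StochasticMatrices.

Section VariationDistance.
Context {R : realType} {n : nat}.
Implicit Types (u v w : 'rV[R]_n) (K : 'M[R]_n).

Lemma vdist_ge0 v w : 0 <= vdist v w.
Proof. by rewrite /vdist mulr_ge0 ?invr_ge0 ?sumr_ge0. Qed.

Lemma vdist_le1 v w : prob_vector v -> prob_vector w -> vdist v w <= 1.
Proof.
move=> [v_ge0 v_sum] [w_ge0 w_sum].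
have : \sum_j `|v 0 j - w 0 j| <= \sum_j (v 0 j + w 0 j).
  apply: ler_sum => j _; apply: (le_trans (ler_normB _ _)).
  by rewrite !ger0_norm.
by rewrite big_split /= v_sum w_sum /vdist => ?; lra.
Qed.

Lemma vdist_mulmx_contract K (d : R) v w : (forall i j, d <= K i j) ->
  (forall i, \sum_j K i j = 1) -> \sum_i v 0 i = \sum_i w 0 i ->
  vdist (v *m K) (w *m K) <= (1 - n%:R * d) * vdist v w.
Proof.
move=> K_ge K_sum vw_sum; rewrite /vdist mulrCA ler_pM2l ?invr_gt0 //.
have -> : \sum_j `|(v *m K) 0 j - (w *m K) 0 j| = \sum_j `|((v - w) *m K) 0 j|.
  by apply: eq_bigr => j _; rewrite mulmxBl !mxE.
have -> : \sum_j `|v 0 j - w 0 j| = \sum_j `|(v - w) 0 j|.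
  by apply: eq_bigr => j _; rewrite !mxE.
apply: sum_norm_row_contract => //.
by under eq_bigr do rewrite !mxE; rewrite sumrB vw_sum subrr.
Qed.

Lemma vdist_mulmx_le K v w : stochastic K -> \sum_i v 0 i = \sum_i w 0 i ->
  vdist (v *m K) (w *m K) <= vdist v w.
Proof.
move=> [K_ge0 K_sum] vw_sum.
by have := vdist_mulmx_contract K 0 v w K_ge0 K_sum vw_sum; rewrite mulr0 subr0 mul1r.
Qed.

Lemma sum_set_le_vdist v w (A : {set 'I_n}) : \sum_j v 0 j = \sum_j w 0 j ->
  \sum_(j in A) (w 0 j - v 0 j) <= vdist v w.
Proof.
move=> vw_sum.
have sumA0 : \sum_(j in A) (v 0 j - w 0 j) + \sum_(j | j \notin A) (v 0 j - w 0 j) = 0.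
  transitivity (\sum_j (v 0 j - w 0 j)); first by rewrite [RHS](bigID (mem A)).
  by rewrite sumrB vw_sum subrr.
have leA : - \sum_(j in A) (v 0 j - w 0 j) <= \sum_(j in A) `|v 0 j - w 0 j|.
  by rewrite -sumrN; apply: ler_sum => j _; rewrite -normrN ler_norm.
have leAC : \sum_(j | j \notin A) (v 0 j - w 0 j) <= \sum_(j | j \notin A) `|v 0 j - w 0 j|.
  by apply: ler_sum => j _; exact: ler_norm.
have -> : \sum_(j in A) (w 0 j - v 0 j) = - \sum_(j in A) (v 0 j - w 0 j).
  by rewrite -sumrN; apply: eq_bigr => j _; rewrite opprB.
rewrite /vdist [X in 2^-1 * X](bigID (mem A)) /=.
lra.
Qed.

Lemma vdist_mixture u K w (e : R) : prob_vector u ->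
  (forall x, vdist (unitv R x *m K) w <= e) -> vdist (u *m K) w <= e.
Proof.
move=> [u_ge0 u_sum] unit_le; rewrite /vdist.
have uK_w j : (u *m K) 0 j - w 0 j = \sum_x u 0 x * ((unitv R x *m K) 0 j - w 0 j).
  rewrite mxE; under [RHS]eq_bigr do rewrite unitv_mulmx mulrBr.
  by rewrite sumrB -mulr_suml u_sum mul1r.
under eq_bigr do rewrite uK_w.
apply: (@le_trans _ _
    (2^-1 * \sum_j \sum_x u 0 x * `|(unitv R x *m K) 0 j - w 0 j|)).
  rewrite ler_pM2l ?invr_gt0 //; apply: ler_sum => j _.
  apply: (le_trans (ler_norm_sum _ _ _)).
  by apply: ler_sum => x _; rewrite normrM ger0_norm.
rewrite exchange_big /= mulr_sumr.
apply: (@le_trans _ _ (\sum_x u 0 x * e)); last by rewrite -mulr_suml u_sum mul1r.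
apply: ler_sum => x _; rewrite -mulr_sumr mulrCA.
by rewrite ler_wpM2l // unit_le.
Qed.

(* The continuized distance is a Poisson average of the discrete ones. *)
Lemma vdist_poisson_le (L : 'M[R]_n) v w (s B : R) : 0 <= s ->
  (forall N, \sum_(k < N) exp_coeff s k * vdist (v *m L ^+ k) w <= B) ->
  expR s * vdist (v *m expm (s *: (L - 1%:M))) w <= B.
Proof.
move=> s_ge0 partial_le.
set E := expm (s *: (L - 1%:M)).
have cvg_entry j : \sum_(k < N) exp_coeff s k * ((v *m L ^+ k) 0 j - w 0 j)
    @[N --> \oo] --> expR s * (v *m E) 0 j - expR s * w 0 j.
  have -> : (fun N => \sum_(k < N) exp_coeff s k * ((v *m L ^+ k) 0 j - w 0 j)) =
      fun N => \sum_(k < N) exp_coeff s k * (v *m L ^+ k) 0 j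
               - (\sum_(k < N) exp_coeff s k) * w 0 j.
    by apply: funext => N; rewrite mulr_suml -sumrB; under eq_bigr do rewrite mulrBr.
  apply: cvgB; first exact: cvg_poisson_row.
  by apply: cvgM; [exact: cvg_sum_exp_coeff | exact: cvg_cst].
have cvg_dist : 2^-1 * \sum_j `|\sum_(k < N) exp_coeff s k * ((v *m L ^+ k) 0 j - w 0 j)|
    @[N --> \oo] --> expR s * vdist (v *m E) w.
  have -> : expR s * vdist (v *m E) w =
      2^-1 * \sum_j `|expR s * (v *m E) 0 j - expR s * w 0 j|.
    rewrite /vdist mulrCA mulr_sumr; congr (_ * _); apply: eq_bigr => j _.
    by rewrite -mulrBr normrM ger0_norm ?expR_ge0.
  apply: cvgM; first exact: cvg_cst.
  apply: cvg_big => [|j _]; first exact: add_continuous.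
  by apply: cvg_norm; exact: cvg_entry.
apply: (cvgr_to_le cvg_dist); apply: nearW => N.
apply: le_trans (partial_le N); rewrite /vdist.
under [leRHS]eq_bigr do rewrite mulrCA.
rewrite -[leRHS]mulr_sumr ler_pM2l ?invr_gt0 //.
under [leRHS]eq_bigr do rewrite mulr_sumr.
rewrite exchange_big /=; apply: ler_sum => j _.
apply: (le_trans (ler_norm_sum _ _ _)); apply: ler_sum => k _.
by rewrite normrM ger0_norm ?exp_coeff_ge0.
Qed.

End VariationDistance.

Section Leakage.
Context {R : realType} {n : nat}.
Variables (P : 'M[R]_n) (pi : 'rV[R]_n).
Hypotheses (P_st : stochastic P) (pi_st : stationary P pi).
Implicit Types (v : 'rV[R]_n) (S : {set 'I_n}).

Definition flow (A B : {set 'I_n}) := \sum_(i in A) \sum_(j in B) pi 0 i * P i j.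

Lemma flow_ge0 A B : 0 <= flow A B.
Proof.
apply: sumr_ge0 => i _; apply: sumr_ge0 => j _.
by apply: mulr_ge0; [exact: pi_st.1 | exact: P_st.1].
Qed.

Lemma sum_row_ctm v t : \sum_j (v *m ctm P t) 0 j = \sum_i v 0 i.
Proof.
have cvg_poisson : \sum_j \sum_(k < N) exp_coeff t k * (v *m P ^+ k) 0 j
    @[N --> \oo] --> \sum_j expR t * (v *m ctm P t) 0 j.
  apply: cvg_big => [|j _]; first exact: add_continuous.
  exact: cvg_poisson_row.
have mass_eq : (fun N => \sum_j \sum_(k < N) exp_coeff t k * (v *m P ^+ k) 0 j) =
    fun N => (\sum_(k < N) exp_coeff t k) * \sum_i v 0 i.
  apply: funext => N /=; rewrite exchange_big mulr_suml; apply: eq_bigr => k _ /=.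
  by rewrite -mulr_sumr sum_row_stochastic //; exact: stochasticX.
rewrite mass_eq in cvg_poisson.
have cvg_mass : (\sum_(k < N) exp_coeff t k) * \sum_i v 0 i
    @[N --> \oo] --> expR t * \sum_i v 0 i.
  by apply: cvgM; [exact: cvg_sum_exp_coeff | exact: cvg_cst].
apply: (mulfI (lt0r_neq0 (expR_gt0 t))).
by rewrite mulr_sumr -(cvg_lim _ cvg_poisson) // (cvg_lim _ cvg_mass).
Qed.

Lemma row_pow_le_stationary v (C : R) k : (forall i, v 0 i <= C * pi 0 i) ->
  forall j, (v *m P ^+ k) 0 j <= C * pi 0 j.
Proof.
move=> v_le; elim: k => [|k IH] j; first by rewrite expr0 mulmx1.
rewrite exprSr -mulmxE mulmxA.
apply: le_trans (ler_row_stochastic _ _ (C *: pi) P_st _ j) _.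
  by move=> i; rewrite [leRHS]mxE.
by rewrite -scalemxAl pi_st.2.2 mxE.
Qed.

Lemma sum_setC_row_pow_le S v (C : R) k : (forall i, 0 <= v 0 i) ->
  (forall i, v 0 i <= C * pi 0 i) ->
  \sum_(j in ~: S) (v *m P ^+ k) 0 j <= \sum_(j in ~: S) v 0 j + k%:R * (C * flow S (~: S)).
Proof.
move=> v_ge0 v_le; elim: k => [|k IH]; first by rewrite expr0 mulmx1 mul0r addr0.
have nu_ge0 := row_stochastic_ge0 _ _ (stochasticX _ k P_st) v_ge0.
have nu_le := row_pow_le_stationary _ _ k v_le.
rewrite -natr1 mulrDl mul1r addrA exprSr -mulmxE mulmxA.
under eq_bigr do rewrite mxE.
rewrite exchange_big /= (bigID (mem S)) /= addrC lerD //.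
  apply: le_trans IH; rewrite [leRHS](eq_bigl (fun i => i \notin S)) => [|i]; last first.
    by rewrite inE.
  apply: ler_sum => i _.
  rewrite -mulr_sumr ler_piMr // -(P_st.2 i) [leRHS](bigID (mem (~: S))) /=.
  by rewrite lerDl sumr_ge0 // => j _; exact: P_st.1.
rewrite /flow mulr_sumr; apply: ler_sum => i _.
rewrite mulr_sumr; apply: ler_sum => j _; rewrite mulrA.
by rewrite ler_wpM2r ?nu_le //; exact: P_st.1.
Qed.

Lemma sum_setC_row_ctm_le S v (C t : R) : 0 <= C -> 0 <= t ->
  (forall i, 0 <= v 0 i) -> (forall i, v 0 i <= C * pi 0 i) ->
  \sum_(j in ~: S) (v *m ctm P t) 0 j <= \sum_(j in ~: S) v 0 j + t * (C * flow S (~: S)).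
Proof.
move=> C_ge0 t_ge0 v_ge0 v_le.
set out0 := \sum_(j in ~: S) v 0 j; set leak := C * flow S (~: S).
have out0_ge0 : 0 <= out0 by exact: sumr_ge0.
have leak_ge0 : 0 <= leak by rewrite mulr_ge0 ?flow_ge0.
have cvg_out : \sum_(j in ~: S) \sum_(k < N) exp_coeff t k * (v *m P ^+ k) 0 j
    @[N --> \oo] --> \sum_(j in ~: S) expR t * (v *m ctm P t) 0 j.
  apply: cvg_big => [|j _]; first exact: add_continuous.
  exact: cvg_poisson_row.
rewrite -(ler_pM2l (expR_gt0 t)) mulr_sumr.
apply: (cvgr_to_le cvg_out); apply: nearW => N.
rewrite exchange_big /=.
apply: (@le_trans _ _ (\sum_(k < N) exp_coeff t k * (out0 + k%:R * leak))).
  apply: ler_sum => k _; rewrite -mulr_sumr ler_wpM2l ?exp_coeff_ge0 //.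
  exact: sum_setC_row_pow_le.
under eq_bigr do rewrite mulrDr mulrA.
rewrite big_split /= -!mulr_suml mulrDr lerD //.
  by rewrite ler_wpM2r ?sum_exp_coeff_le_expR.
rewrite [leRHS]mulrA [expR t * t]mulrC; apply: ler_wpM2r => //.
apply: (@le_trans _ _ (\sum_(k < N.+1) exp_coeff t k * k%:R)).
  by rewrite big_ord_recr /= lerDl mulr_ge0 ?exp_coeff_ge0.
by rewrite sum_exp_coeff_mulrn ler_wpM2l ?sum_exp_coeff_le_expR.
Qed.

Definition cond_dist S : 'rV[R]_n :=
  \row_i (if i \in S then pi 0 i / piS pi S else 0).

Lemma cond_dist_ge0 S : 0 < piS pi S -> forall i, 0 <= cond_dist S 0 i.
Proof.
move=> piS_gt0 i; rewrite mxE; case: ifP => // _.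
by rewrite divr_ge0 ?pi_st.1 ?ltW.
Qed.

Lemma prob_vector_cond_dist S : 0 < piS pi S -> prob_vector (cond_dist S).
Proof.
move=> piS_gt0; split; first exact: cond_dist_ge0.
under eq_bigr do rewrite mxE.
by rewrite -big_mkcond /= -mulr_suml divff ?lt0r_neq0.
Qed.

Lemma cond_dist_le S : 0 < piS pi S ->
  forall i, cond_dist S 0 i <= (piS pi S)^-1 * pi 0 i.
Proof.
move=> piS_gt0 i; rewrite mxE mulrC; case: ifP => // _.
by rewrite mulr_ge0 ?pi_st.1 ?invr_ge0 ?ltW.
Qed.

Lemma sum_setC_cond_dist S : \sum_(j in ~: S) cond_dist S 0 j = 0.
Proof. by rewrite big1 // => j; rewrite inE mxE => /negbTE ->. Qed.

End Leakage.

Section LazyChain.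
Context {R : realType} {n : nat}.
Variables (P : 'M[R]_n) (pi : 'rV[R]_n).
Hypotheses (P_st : stochastic P) (pi_st : stationary P pi).

Definition lazy : 'M[R]_n := 2^-1 *: (1%:M + P).

Lemma stochastic_lazy : stochastic lazy.
Proof.
have [P_ge0 P_sum] := P_st; split=> [i j|i].
  rewrite !mxE mulr_ge0 ?invr_ge0 // addr_ge0 //; by case: (i == j).
under eq_bigr do rewrite !mxE.
rewrite -mulr_sumr big_split /= P_sum (bigD1 i) //= eqxx big1 ?addr0.
  by rewrite mulVf ?pnatr_eq0.
by move=> j ji; rewrite eq_sym (negbTE ji).
Qed.

Lemma stationary_lazyX k : pi *m lazy ^+ k = pi.
Proof.
elim: k => [|k IH]; first by rewrite expr0 mulmx1.
rewrite exprSr -mulmxE mulmxA IH /lazy -scalemxAr mulmxDr mulmx1 pi_st.2.2.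
by apply/matrixP => i j; rewrite !mxE; field.
Qed.

Lemma ctm_lazy t : ctm P t = expm ((2 * t) *: (lazy - 1%:M)).
Proof. by rewrite /ctm; congr expm; apply/matrixP => i j; rewrite !mxE; field. Qed.

Lemma lazyX_ge m k i j : (k <= m)%N -> 2^-1 ^+ m * (P ^+ k) i j <= (lazy ^+ m) i j.
Proof.
move=> le_km; rewrite /lazy mxpowZ mxE ler_wpM2l ?exprn_ge0 ?invr_ge0 //.
have P_comm : GRing.comm (1%:M : 'M[R]_n) P by apply/commr_sym/commr1.
have Pk_ge0 l : 0 <= (P ^+ l) i j by exact: (stochasticX _ l P_st).1.
have one_mx : (1%:M : 'M[R]_n) = 1 by [].
rewrite (exprDn_comm _ P_comm) summxE (bigD1 (Ordinal (le_km : k < m.+1)%N)) //=.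
rewrite mulmxnE one_mx expr1n mul1r -[X in X <= _]addr0 lerD //.
  by rewrite -mulr_natr ler_peMr // ler1n bin_gt0.
by apply: sumr_ge0 => l _; rewrite mulmxnE expr1n mul1r mulrn_wge0.
Qed.

Lemma lazy_doeblin : irreducible P ->
  exists m (d : R), 0 < d /\ forall i j, d <= (lazy ^+ m) i j.
Proof.
move=> P_irr.
have /choice [kP kP_pos] : forall p : 'I_n * 'I_n, exists k, 0 < (P ^+ k) p.1 p.2.
  by move=> [i j]; exact: P_irr.
set m := \max_p kP p.
exists m, (\big[Order.min/1]_(p : 'I_n * 'I_n) (lazy ^+ m) p.1 p.2); split.
  apply: lt_bigmin => // p _.
  apply: lt_le_trans (lazyX_ge _ _ _ _ (leq_bigmax p)).
  by rewrite mulr_gt0 ?exprn_gt0 ?invr_gt0.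
move=> i j.
exact: (bigmin_le _ (i, j) (fun p : 'I_n * 'I_n => (lazy ^+ m) p.1 p.2)).
Qed.

Lemma vdist_lazyX_le v k l : prob_vector v ->
  vdist (v *m lazy ^+ (k + l)) pi <= vdist (v *m lazy ^+ k) pi.
Proof.
move=> [_ v_sum].
rewrite exprD -mulmxE mulmxA -[X in vdist _ X <= _](stationary_lazyX l).
apply: vdist_mulmx_le; first exact: stochasticX stochastic_lazy.
by rewrite sum_row_stochastic ?v_sum ?pi_st.2.1 //; exact: stochasticX stochastic_lazy.
Qed.

Lemma vdist_lazyX_small v (e : R) : irreducible P -> prob_vector v -> 0 < e ->
  exists K, forall k, (K <= k)%N -> vdist (v *m lazy ^+ k) pi <= e.
Proof.
move=> P_irr v_prob e_gt0; have [v_ge0 v_sum] := v_prob.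
have [m [d [d_gt0 d_le]]] := lazy_doeblin P_irr.
have n_gt0 : (0 < n)%N.
  case: n v v_sum {v_prob v_ge0 d_le} => // v; rewrite big_ord0 => /eqP.
  by rewrite eq_sym oner_eq0.
set q := 1 - n%:R * d.
have q_ge0 : 0 <= q.
  rewrite subr_ge0 -[leRHS]((stochasticX _ m stochastic_lazy).2 (Ordinal n_gt0)).
  have -> : n%:R * d = \sum_(j < n) d by rewrite sumr_const card_ord mulr_natl.
  by apply: ler_sum => j _.
have q_lt1 : `|q| < 1.
  by rewrite ger0_norm // /q ltrBlDr ltrDl mulr_gt0 ?ltr0n.
have decay a : vdist (v *m lazy ^+ (a * m)) pi <= q ^+ a.
  elim: a => [|a IH].
    by rewrite mul0n !expr0 mulmx1 vdist_le1 //; exact: prob_vector_stationary pi_st.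
  apply: le_trans (_ : q * vdist (v *m lazy ^+ (a * m)) pi <= _); last first.
    by rewrite exprS ler_wpM2l.
  rewrite mulSnr exprD -mulmxE mulmxA -[X in vdist _ X <= _](stationary_lazyX m).
  apply: vdist_mulmx_contract => //; first exact: (stochasticX _ m stochastic_lazy).2.
  by rewrite sum_row_stochastic ?v_sum ?pi_st.2.1 //; exact: stochasticX stochastic_lazy.
have [N _ qN_lt] := cvgr0_norm_lt (fun k => q ^+ k) (cvg_expr q_lt1) _ e_gt0.
exists (N * m)%N => k le_Nm_k.
rewrite -(subnKC le_Nm_k); apply: le_trans (vdist_lazyX_le _ _ _ v_prob) _.
apply: le_trans (decay N) _.
by have := qN_lt N (leqnn N); rewrite /= ger0_norm ?exprn_ge0 // => /ltW.
Qed.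

End LazyChain.

Lemma div_le_of_forall_gt {R : realFieldType} (c tau phi : R) : 0 <= c -> 0 <= phi ->
  (forall t, tau < t -> 0 < t -> c <= t * phi) -> c / tau <= phi.
Proof.
move=> c_ge0 phi_ge0 c_le.
have [tau_le0|tau_gt0] := lerP tau 0.
  by apply: le_trans phi_ge0; rewrite mulr_ge0_le0 // invr_le0.
rewrite ler_pdivrMr // mulrC; apply/ler_addgt0Pr => e e_gt0.
set d := e / (phi + 1).
have phi1_gt0 : 0 < phi + 1 by rewrite ltr_wpDl.
have d_gt0 : 0 < d by rewrite divr_gt0.
have d_phi1 : d * (phi + 1) = e by rewrite divfK ?lt0r_neq0.
have : c <= (tau + d) * phi by apply: c_le; rewrite ?ltrDl ?addr_gt0.
nra.
Qed.

(* The arithmetic behind the conductance bound: m is the mass that has escaped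
   from S, at least pi(~S) - e and at most t Q(S,~S) / pi(S). *)
Lemma escape_arith {R : realFieldType} {a b F F' m e t : R} :
  a + b = 1 -> 0 < a <= 2^-1 -> 0 <= e -> 0 <= F' -> 0 <= t ->
  m <= t * (a^-1 * F) -> b - m <= e -> 2^-1 - e <= t * ((F + F') / (2 * a * b)).
Proof.
move=> ab1 /andP[a_gt0 a_le] e_ge0 F'_ge0 t_ge0 m_le m_ge.
have escape : a * (b - e) <= t * F.
  have : a * (b - e) <= a * (t * (a^-1 * F)) by rewrite ler_pM2l //; lra.
  by rewrite mulrCA mulVKf ?lt0r_neq0.
have b_ge_half : 0 <= 2 * b - 1 by lra.
have : 0 <= e * a * (2 * b - 1) by rewrite !mulr_ge0 // ltW.
have : 0 <= t * F' by rewrite mulr_ge0.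
rewrite mulrA ler_pdivlMr ?mulr_gt0 //; last lra.
nra.
Qed.

Section ContinuizedChain.
Context {R : realType} {n : nat}.
Variables (P : 'M[R]_n) (pi : 'rV[R]_n).
Hypotheses (P_st : stochastic P) (pi_st : stationary P pi).

Lemma vdist_ctm_small v (e : R) : irreducible P -> prob_vector v -> 0 < e ->
  exists T0, 0 < T0 /\ forall t, T0 <= t -> vdist (v *m ctm P t) pi <= e.
Proof.
move=> P_irr v_prob e_gt0.
have e2_gt0 : 0 < e / 2 by rewrite divr_gt0.
have [K K_le] := vdist_lazyX_small _ _ P_st pi_st _ _ P_irr v_prob e2_gt0.
set F : R := K.+1`!%:R.
have F_gt0 : 0 < F by rewrite ltr0n fact_gt0.
have KF_ge0 : 0 <= K%:R * F / e by rewrite divr_ge0 ?mulr_ge0 // ltW.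
exists (1 + K%:R * F / e); split=> [|t T0_le]; first lra.
set s := 2 * t.
have s_ge1 : 1 <= s by rewrite /s; lra.
have KF_le : K%:R * F <= e / 2 * s.
  have : K%:R * F / e <= t by lra.
  by rewrite ler_pdivrMr // /s => ?; lra.
have head_le : s * (K%:R * s ^+ K) <= K%:R * F * expR s.
  rewrite mulrCA -exprS -mulrA ler_wpM2l //.
  by apply: expr_le_expR; lra.
rewrite ctm_lazy -/s -(ler_pM2l (expR_gt0 s)).
apply: vdist_poisson_le => [|N]; first lra.
apply: le_trans (poisson_sum_le _ _ _ _ N s_ge1 _ K_le) _.
  move=> k; rewrite vdist_ge0 vdist_le1 //.
    by apply: prob_vector_stochastic v_prob; exact/stochasticX/stochastic_lazy.
  exact: prob_vector_stationary pi_st.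
have expR_gt0s := expR_gt0 s.
nra.
Qed.

Lemma vdist_ctm_after_mixtime (e t : R) x : irreducible P -> 0 < e ->
  mixtime P pi e < t -> vdist (unitv R x *m ctm P t) pi <= e.
Proof.
move=> P_irr e_gt0 mix_lt.
have [T0 [T0_gt0 T0_mixed]] := vdist_ctm_small _ _ P_irr (prob_vector_unitv x) e_gt0.
set E := [set t : R | 0 < t /\
  forall t' : R, t <= t' -> vdist (unitv R x *m ctm P t') pi <= e].
have E_inf : has_inf E.
  by split; [exists T0 | exists 0 => y [y_gt0 _]; exact: ltW].
have mixx_lt : inf E < t.
  apply: le_lt_trans mix_lt.
  exact: (le_bigmax _ (fun x => mixtime_from P pi e x) x).
have gap_gt0 : 0 < t - inf E by rewrite subr_gt0.
have [t' [_ t'_mixed] t'_lt] := inf_adherent gap_gt0 E_inf.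
by apply: t'_mixed; rewrite addrC subrK in t'_lt; exact: ltW.
Qed.

Lemma piS_setC S : piS pi S + piS pi (~: S) = 1.
Proof.
rewrite /piS -(prob_vector_stationary _ _ pi_st).2 [RHS](bigID (mem S)) /=.
by congr (_ + _); apply: eq_bigl => i; rewrite inE.
Qed.

Lemma conductanceS_setC S : conductanceS P pi (~: S) = conductanceS P pi S.
Proof. by rewrite /conductanceS finset.setCK addrC mulrAC. Qed.

Lemma conductanceS_ge0 S : 0 <= conductanceS P pi S.
Proof.
have piS_ge0 A : 0 <= piS pi A by apply: sumr_ge0 => i _; exact: pi_st.1.
by rewrite divr_ge0 ?addr_ge0 ?flow_ge0 ?mulr_ge0.
Qed.

Lemma conductanceS_ge_half S (e t : R) : 0 <= e -> 0 < piS pi S <= 2^-1 -> 0 <= t ->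
  (forall x, vdist (unitv R x *m ctm P t) pi <= e) ->
  2^-1 - e <= t * conductanceS P pi S.
Proof.
move=> e_ge0 /andP[piS_gt0 piS_le] t_ge0 mixed.
set mu := cond_dist pi S.
have mu_prob := prob_vector_cond_dist P pi pi_st S piS_gt0.
have mu_mixed : vdist (mu *m ctm P t) pi <= e by exact: vdist_mixture.
have left_ge : piS pi (~: S) - \sum_(j in ~: S) (mu *m ctm P t) 0 j <= e.
  apply: le_trans mu_mixed; rewrite /piS -sumrB.
  apply: sum_set_le_vdist.
  by rewrite sum_row_ctm // mu_prob.2 (prob_vector_stationary _ _ pi_st).2.
have piSV_ge0 : 0 <= (piS pi S)^-1 by rewrite invr_ge0 ltW.
have left_le : \sum_(j in ~: S) (mu *m ctm P t) 0 j <= t * ((piS pi S)^-1 * flow P pi S (~: S)).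
  have := sum_setC_row_ctm_le P pi P_st pi_st S mu _ t piSV_ge0 t_ge0
    (cond_dist_ge0 P pi pi_st S piS_gt0) (cond_dist_le P pi pi_st S piS_gt0).
  by rewrite sum_setC_cond_dist add0r.
rewrite /conductanceS -/(flow P pi S (~: S)) -/(flow P pi (~: S) S).
apply: (escape_arith (piS_setC S) _ e_ge0 _ t_ge0 left_le left_ge).
  by rewrite piS_gt0.
exact: flow_ge0.
Qed.

Lemma conductanceS_ge_mixtime S (e : R) : irreducible P -> 0 < e <= 2^-1 ->
  0 < piS pi S < 1 -> (2^-1 - e) / mixtime P pi e <= conductanceS P pi S.
Proof.
move=> P_irr /andP[e_gt0 e_le] /andP[piS_gt0 piS_lt1].
apply: div_le_of_forall_gt; [lra | exact: conductanceS_ge0 | move=> t mix_lt t_gt0].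
have mixed x : vdist (unitv R x *m ctm P t) pi <= e.
  exact: vdist_ctm_after_mixtime.
have piSC := piS_setC S.
have [S_small|S_large] := lerP (piS pi S) 2^-1.
  by apply: conductanceS_ge_half (ltW e_gt0) _ (ltW t_gt0) mixed; rewrite piS_gt0.
rewrite -conductanceS_setC.
apply: conductanceS_ge_half (ltW e_gt0) _ (ltW t_gt0) mixed.
by apply/andP; split; lra.
Qed.

End ContinuizedChain.

Theorem theorem18 (R : realType) (n : nat) (P : 'M[R]_n) (pi : 'rV[R]_n) :
  ergodic P -> stationary P pi ->
  forall S : {set 'I_n}, 0 < piS pi S < 1 ->
    (2^-1 - (2 * expR 1)^-1) / mixtime P pi (2 * expR 1)^-1
      <= conductanceS P pi S.
Proof.
move=> [P_st [P_irr _]] pi_st S piS_bounds.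
apply: conductanceS_ge_mixtime => //.
rewrite invr_gt0 mulr_gt0 ?expR_gt0 //= invfM ler_piMr ?invr_ge0 //.
by rewrite invf_le1 ?expR_gt0 //; have := expR_ge1Dx (1 : R); lra.
Qed.
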